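(* Let $x_0\in(0,1)$ and $F(y;x_0)=\frac{e^{(x_0-2)y}-e^{-x_0y}}{2(1-e^{-2y})}$ for $y>0$. Then $F(\cdot;x_0)$ is strictly increasing on $\big(\frac{\ln(2-x_0)-\ln x_0}{2(1-x_0)},\infty\big)$. *)

From Stdlib Require Import Reals.
Open Scope R_scope.

Definition F (x0 y : R) : R :=
  (exp ((x0 - 2) * y) - exp (- x0 * y)) / (2 * (1 - exp (-2 * y))).

Definition ystar (x0 : R) : R := (ln (2 - x0) - ln x0) / (2 * (1 - x0)).

(* Writing c = 1 - x0, one has F(y) = - sinh(c y) / (2 sinh y).  For 0 < c < 1 the
   ratio sinh(c y) / sinh y is strictly decreasing on (0, oo): the numerator of its
   derivative, c cosh(c y) sinh y - sinh(c y) cosh y, vanishes at 0 and has derivative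
   -(1 - c^2) sinh(c y) sinh y < 0.  So F is strictly increasing on all of (0, oo),
   which contains the interval of the theorem since ystar x0 > 0. *)

From Stdlib Require Import Reals Lra.
From Coquelicot Require Import Coquelicot.
Open Scope R_scope.

Lemma increasing_of_derive_pos (f f' : R -> R) (u v : R) : u < v ->
  (forall t, u <= t <= v -> is_derive f t (f' t)) ->
  (forall t, u < t < v -> 0 < f' t) -> f u < f v.
Proof.
  intros huv hd hpos.
  destruct (MVT_cor2 f f' u v huv) as [t [Heq Ht]].
  { intros t Ht. apply is_derive_Reals, hd, Ht. }
  assert (0 < f' t * (v - u)) by (apply Rmult_lt_0_compat; [apply hpos|]; lra).
  lra.
Qed.

(* [sh] and [ch] are twice [sinh] and [cosh], spelled out so that [auto_derive] applies. *)
Definition sh (t : R) : R := exp t - exp (- t).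
Definition ch (t : R) : R := exp t + exp (- t).

Lemma sh_pos (t : R) : 0 < t -> 0 < sh t.
Proof.
  intros ht. unfold sh.
  assert (exp (- t) < exp t) by (apply exp_increasing; lra). lra.
Qed.

Definition sh_ratio (c y : R) : R := sh (c * y) / sh y.

Definition sh_ratio_numer (c y : R) : R := sh (c * y) * ch y - c * ch (c * y) * sh y.

Lemma sh_ratio_numer_pos (c y : R) : 0 < c < 1 -> 0 < y -> 0 < sh_ratio_numer c y.
Proof.
  intros hc hy.
  assert (Hzero : sh_ratio_numer c 0 = 0).
  { unfold sh_ratio_numer, sh, ch. rewrite Rmult_0_r, Ropp_0, exp_0. ring. }
  rewrite <- Hzero.
  apply (increasing_of_derive_pos (sh_ratio_numer c)
           (fun t => (1 - c * c) * sh (c * t) * sh t)); [exact hy | |].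
  - intros t _. unfold sh_ratio_numer, sh, ch. auto_derive; [easy | ring].
  - intros t Ht.
    assert (0 < 1 - c * c) by nra.
    assert (0 < sh (c * t)) by (apply sh_pos; nra).
    assert (0 < sh t) by (apply sh_pos; lra).
    apply Rmult_lt_0_compat; [apply Rmult_lt_0_compat|]; assumption.
Qed.

Lemma sh_ratio_decreasing (c a b : R) : 0 < c < 1 -> 0 < a -> a < b ->
  sh_ratio c b < sh_ratio c a.
Proof.
  intros hc ha hab.
  enough (- sh_ratio c a < - sh_ratio c b) by lra.
  apply (increasing_of_derive_pos (fun y => - sh_ratio c y)
           (fun t => sh_ratio_numer c t / (sh t) ^ 2)); [exact hab | |].
  - intros t Ht.
    pose proof (sh_pos t ltac:(lra)) as Hsh.
    unfold sh_ratio, sh_ratio_numer, sh, ch in *.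
    auto_derive; [lra | field; lra].
  - intros t Ht.
    assert (0 < sh t) by (apply sh_pos; lra).
    apply Rdiv_lt_0_compat; [apply sh_ratio_numer_pos; lra | nra].
Qed.

Lemma F_eq_sh_ratio (x0 y : R) : 0 < y -> F x0 y = - sh_ratio (1 - x0) y / 2.
Proof.
  intros hy. unfold F, sh_ratio, sh.
  set (c := 1 - x0).
  (* factor exp (- y) out of numerator and denominator *)
  assert (E1 : exp ((x0 - 2) * y) = exp (- y) * exp (- (c * y))).
  { rewrite <- exp_plus. f_equal. unfold c. ring. }
  assert (E2 : exp (- x0 * y) = exp (- y) * exp (c * y)).
  { rewrite <- exp_plus. f_equal. unfold c. ring. }
  assert (E3 : exp (-2 * y) = exp (- y) * exp (- y)).
  { rewrite <- exp_plus. f_equal. ring. }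
  assert (E4 : 1 = exp (- y) * exp y).
  { rewrite <- exp_plus, Rplus_opp_l. now rewrite exp_0. }
  rewrite E1, E2, E3. pattern 1 at 1. rewrite E4.
  pose proof (sh_pos y hy) as Hsh. unfold sh in Hsh.
  pose proof (exp_pos (- y)).
  field. split; [lra|].
  rewrite <- Rmult_minus_distr_l. apply Rmult_integral_contrapositive; split; lra.
Qed.

Lemma ystar_pos (x0 : R) : 0 < x0 < 1 -> 0 < ystar x0.
Proof.
  intros hx0. unfold ystar. apply Rdiv_lt_0_compat; [|lra].
  assert (ln x0 < ln (2 - x0)) by (apply ln_increasing; lra). lra.
Qed.

Theorem mainTheorem8 (x0 : R) (hx0 : 0 < x0 < 1) :
  forall a b : R, ystar x0 < a -> a < b -> F x0 a < F x0 b.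
Proof.
  intros a b ha hab.
  pose proof (ystar_pos x0 hx0).
  rewrite (F_eq_sh_ratio x0 a), (F_eq_sh_ratio x0 b) by lra.
  pose proof (sh_ratio_decreasing (1 - x0) a b ltac:(lra) ltac:(lra) hab).
  lra.
Qed.
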